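(* Let $k,d,n\in\mathbb N$, $Q,K,V\in\mathbb R^{k\times d}$, $A:=K^\top Q/\sqrt{k}$ and $R>0$. Then the self-attention map $f$ with parameters $(A,V)$ is Lipschitz continuous on $B_R^n$ (with respect to the Frobenius norm on input and output), and $$\mathrm{Lip}\big(f_{|B_R^n}\big)\le \sqrt{3}\,\|V\|_2\big(\|A\|_2^2R^4(4n+1)+n\big)^{1/2}.$$
   Context: For $X=(x_1,\dots,x_n)\in(\mathbb R^d)^n$, self-attention with parameters $(A,V)$ is $f(X)=\big(V\sum_{j=1}^nP_{ij}x_j\big)_{1\le i\le n}\in(\mathbb R^k)^n$, where $P_{ij}=\exp(x_i^\top A^\top x_j)/\sum_{l=1}^n\exp(x_i^\top A^\top x_l)$. The spaces $(\mathbb R^d)^n$ and $(\mathbb R^k)^n$ carry the Frobenius norm $\|X\|_F=(\sum_i|x_i|^2)^{1/2}$, where $|\cdot|$ is the Euclidean norm. $B_R\subset\mathbb R^d$ is the closed Euclidean ball of center $0$ and radius $R$. For $\mathcal X\subset(\mathbb R^d)^n$, $\mathrm{Lip}(f_{|\mathcal X})=\sup_{X\ne Y\in\mathcal X}\|f(X)-f(Y)\|_F/\|X-Y\|_F$. $\|\cdot\|_2$ denotes the spectral (operator) norm of a matrix. *)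

From mathcomp Require Import all_boot all_order all_algebra.
From mathcomp Require Import all_classical all_reals all_analysis.
Set Implicit Arguments. Unset Strict Implicit. Unset Printing Implicit Defensive.
Import Order.TTheory GRing.Theory Num.Theory.
Local Open Scope ring_scope.
Local Open Scope classical_set_scope.

Section Attn.
Variable R : realType.

Definition vnorm (m : nat) (v : 'cV[R]_m) : R := Num.sqrt (\sum_(i < m) v i 0 ^+ 2).

(* A sequence X = (x_1,...,x_n) in (R^m)^n is a function 'I_n -> 'cV_m;
   Frobenius norm ||X||_F = (sum_i |x_i|^2)^(1/2) *)
Definition frob (m n : nat) (X : 'I_n -> 'cV[R]_m) : R :=
  Num.sqrt (\sum_(i < n) vnorm (X i) ^+ 2).

Definition specnorm (p q : nat) (M : 'M[R]_(p, q)) : R :=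
  sup [set vnorm (M *m x) | x in [set x : 'cV[R]_q | vnorm x <= 1]].

Definition attnP (d n : nat) (A : 'M[R]_d) (X : 'I_n -> 'cV[R]_d) (i j : 'I_n) : R :=
  expR (((X i)^T *m A^T *m X j) 0 0) /
  \sum_(l < n) expR (((X i)^T *m A^T *m X l) 0 0).

Definition selfattn (k d n : nat) (A : 'M[R]_d) (V : 'M[R]_(k, d))
  (X : 'I_n -> 'cV[R]_d) : 'I_n -> 'cV[R]_k :=
  fun i => V *m (\sum_(j < n) attnP A X i j *: X j).

End Attn.

From mathcomp Require Import all_boot all_order all_algebra.
From mathcomp Require Import all_classical all_reals all_analysis.
From mathcomp Require Import ring lra.
Import Order.TTheory GRing.Theory Num.Theory.
Set Implicit Arguments. Unset Strict Implicit.
Local Open Scope ring_scope.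

(* Write g(X)_i = sum_j P_ij x_j, so that f(X) = V g(X) and it suffices to
   bound g, at the price of a factor ||V||_2.  Along the segment
   Z_t = Y + t (X - Y), which stays in B_R^n, the mean value theorem applied to
   phi(t) = sum_i <g(X)_i - g(Y)_i, g(Z_t)_i> gives
   ||g(X) - g(Y)||_F^2 = sum_i <g(X)_i - g(Y)_i, D_i>, where D is the derivative
   of g at some Z_c in the direction H = X - Y.  Its row D_i is
   sum_j P_ij h_j plus a covariance of the softmax weights P_i; centring the x_j
   at their P_i-mean g_i and using the weighted variance bound
   sum_j P_ij |x_j - g_i|^2 <= R^2 gives
   |D_i| <= (1 + 2 ||A|| R^2) sum_j P_ij |h_j| + ||A|| R^2 |h_i|,
   and Cauchy-Schwarz turns these row bounds into
   ||D||_F <= sqrt 3 (||A||^2 R^4 (4n+1) + n)^(1/2) ||H||_F. *)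

Section WeightedSums.
Variables (R : realDomainType) (n : nat) (w : 'I_n -> R).
Hypothesis w_ge0 : forall j, 0 <= w j.

Lemma weighted_cauchy_schwarz (a b : 'I_n -> R) :
  (\sum_i w i * a i * b i) ^+ 2 <=
  (\sum_i w i * a i ^+ 2) * (\sum_i w i * b i ^+ 2).
Proof.
set A := \sum_i w i * a i ^+ 2; set B := \sum_i w i * b i ^+ 2.
set C := \sum_i w i * a i * b i.
have lagrange : \sum_i \sum_j w i * w j * (a i * b j - a j * b i) ^+ 2
    = 2 * (A * B - C ^+ 2).
  transitivity (\sum_i (w i * a i ^+ 2 * B - w i * a i * b i * (2 * C)
                        + w i * b i ^+ 2 * A)).
    apply: eq_bigr => i _; rewrite /A /B /C !mulr_sumr -sumrB -big_split /=.
    by apply: eq_bigr => j _; ring.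
  by rewrite big_split sumrB /= -!mulr_suml -/A -/B -/C; ring.
have : 0 <= 2 * (A * B - C ^+ 2).
  rewrite -lagrange; do 2 (apply: sumr_ge0 => ? _).
  by rewrite mulr_ge0 ?sqr_ge0 ?mulr_ge0.
by rewrite pmulr_rge0 // subr_ge0.
Qed.

Hypothesis w_sum1 : \sum_j w j = 1.

Lemma weight_le1 j : w j <= 1.
Proof. by rewrite -w_sum1 (bigD1 j) //= lerDl; apply: sumr_ge0 => i _. Qed.

Lemma sqr_wsum_le (x : 'I_n -> R) : (\sum_j w j * x j) ^+ 2 <= \sum_j x j ^+ 2.
Proof.
have := weighted_cauchy_schwarz (fun=> 1) x.
under eq_bigr do rewrite mulr1.
under [X in _ <= X * _]eq_bigr do rewrite expr1n mulr1.
rewrite w_sum1 mul1r => /le_trans; apply; apply: ler_sum => j _.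
by rewrite ler_piMl ?sqr_ge0 ?weight_le1.
Qed.

End WeightedSums.

Lemma cauchy_schwarz (R : realDomainType) n (a b : 'I_n -> R) :
  (\sum_i a i * b i) ^+ 2 <= (\sum_i a i ^+ 2) * (\sum_i b i ^+ 2).
Proof.
have := @weighted_cauchy_schwarz _ _ (fun=> 1) (fun=> ler01) a b.
by under eq_bigr do rewrite mul1r; under [X in _ <= X * _]eq_bigr do rewrite mul1r;
   under [X in _ <= _ * X]eq_bigr do rewrite mul1r.
Qed.

Lemma cauchy_schwarz_sqrt (R : realType) n (a b : 'I_n -> R) :
  \sum_i a i * b i <= Num.sqrt (\sum_i a i ^+ 2) * Num.sqrt (\sum_i b i ^+ 2).
Proof.
have sqr_sum_ge0 (c : 'I_n -> R) : 0 <= \sum_i c i ^+ 2.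
  by apply: sumr_ge0 => i _; exact: sqr_ge0.
apply: le_trans (ler_norm _) _.
by rewrite -sqrtr_sqr -sqrtrM ?sqr_sum_ge0 // ler_sqrt ?cauchy_schwarz ?mulr_ge0.
Qed.

Section EuclideanNorm.
Variable R : realType.

Definition dot m (u v : 'cV[R]_m) : R := \sum_(l < m) u l 0 * v l 0.

Section Dot.
Variable m : nat.
Implicit Types u v w : 'cV[R]_m.

Lemma dotC u v : dot u v = dot v u.
Proof. by apply: eq_bigr => l _; rewrite mulrC. Qed.

Lemma dot_ge0 u : 0 <= dot u u.
Proof. by apply: sumr_ge0 => l _; rewrite -expr2 sqr_ge0. Qed.

Lemma dotDl u v w : dot (u + v) w = dot u w + dot v w.
Proof. by rewrite /dot -big_split; apply: eq_bigr => l _; rewrite !mxE mulrDl. Qed.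

Lemma dotZl a u w : dot (a *: u) w = a * dot u w.
Proof. by rewrite /dot mulr_sumr; apply: eq_bigr => l _; rewrite !mxE mulrA. Qed.

Lemma dotNl u w : dot (- u) w = - dot u w.
Proof. by rewrite -scaleN1r dotZl mulN1r. Qed.

Lemma dotBl u v w : dot (u - v) w = dot u w - dot v w.
Proof. by rewrite dotDl dotNl. Qed.

Lemma dotDr u v w : dot w (u + v) = dot w u + dot w v.
Proof. by rewrite dotC dotDl !(dotC w). Qed.

Lemma dotZr a u w : dot w (a *: u) = a * dot w u.
Proof. by rewrite dotC dotZl dotC. Qed.

Lemma dotBr u v w : dot w (u - v) = dot w u - dot w v.
Proof. by rewrite !(dotC w) dotBl. Qed.

Lemma dot_suml n (F : 'I_n -> 'cV[R]_m) w : dot (\sum_j F j) w = \sum_j dot (F j) w.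
Proof.
rewrite /dot exchange_big /=; apply: eq_bigr => l _.
by rewrite summxE mulr_suml.
Qed.

Lemma dot_sumr n (F : 'I_n -> 'cV[R]_m) w : dot w (\sum_j F j) = \sum_j dot w (F j).
Proof. by rewrite dotC dot_suml; apply: eq_bigr => j _; rewrite dotC. Qed.

Lemma vnormE u : vnorm u = Num.sqrt (dot u u).
Proof. by rewrite /vnorm /dot; congr Num.sqrt; apply: eq_bigr => l _; rewrite expr2. Qed.

Lemma vnorm_ge0 u : 0 <= vnorm u.
Proof. exact: sqrtr_ge0. Qed.

Lemma vnorm_sq u : vnorm u ^+ 2 = dot u u.
Proof. by rewrite vnormE sqr_sqrtr // dot_ge0. Qed.

Lemma vnorm0 : vnorm (0 : 'cV[R]_m) = 0.
Proof. by rewrite vnormE /dot big1 ?sqrtr0 // => l _; rewrite mxE mul0r. Qed.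

Lemma vnormZ a u : vnorm (a *: u) = `|a| * vnorm u.
Proof. by rewrite !vnormE dotZl dotZr mulrA -expr2 sqrtrM ?sqr_ge0 // sqrtr_sqr. Qed.

Lemma vnormN u : vnorm (- u) = vnorm u.
Proof. by rewrite -scaleN1r vnormZ normrN normr1 mul1r. Qed.

Lemma vnorm_le_of_dot u c : 0 <= c -> dot u u <= c ^+ 2 -> vnorm u <= c.
Proof. by move=> c0 h; rewrite vnormE -(ger0_norm c0) -sqrtr_sqr ler_sqrt // sqr_ge0. Qed.

Lemma dot_le u v : dot u v <= vnorm u * vnorm v.
Proof. exact: cauchy_schwarz_sqrt. Qed.

Lemma norm_dot_le u v : `|dot u v| <= vnorm u * vnorm v.
Proof. by rewrite ler_norml dot_le lerNl -dotNl -(vnormN u) dot_le. Qed.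

Lemma vnormD u v : vnorm (u + v) <= vnorm u + vnorm v.
Proof.
apply: vnorm_le_of_dot; first by rewrite addr_ge0 ?vnorm_ge0.
rewrite dotDl !dotDr (dotC v u) -!vnorm_sq.
have := dot_le u v; nra.
Qed.

Lemma vnorm_sum n (F : 'I_n -> 'cV[R]_m) : vnorm (\sum_j F j) <= \sum_j vnorm (F j).
Proof.
elim/big_ind2: _ => [|u1 x1 u2 x2 h1 h2|j _]; first by rewrite vnorm0.
  exact: le_trans (vnormD _ _) (lerD h1 h2).
exact: lexx.
Qed.

Lemma vnorm_segment_le u v c r : 0 <= c <= 1 -> vnorm u <= r -> vnorm v <= r ->
  vnorm (u + c *: (v - u)) <= r.
Proof.
case/andP=> c0 c1 ur vr.
have -> : u + c *: (v - u) = (1 - c) *: u + c *: v.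
  by apply/matrixP => a b; rewrite !mxE; ring.
apply: le_trans (vnormD _ _) _; rewrite !vnormZ !ger0_norm ?subr_ge0 //; nra.
Qed.

End Dot.

Lemma mulmx_trmx_dot d (A : 'M[R]_d) (u v : 'cV[R]_d) :
  (u^T *m A^T *m v) 0 0 = dot (A *m u) v.
Proof. by rewrite -trmx_mul mxE /dot; apply: eq_bigr => l _; rewrite !mxE. Qed.

Section OperatorNorm.
Variables p q : nat.
Implicit Type M : 'M[R]_(p, q).

Lemma vnorm_mulmx_le_entries M (v : 'cV[R]_q) :
  vnorm (M *m v) <= Num.sqrt (\sum_i \sum_j M i j ^+ 2) * vnorm v.
Proof.
apply: vnorm_le_of_dot; first by rewrite mulr_ge0 ?sqrtr_ge0 ?vnorm_ge0.
rewrite exprMn sqr_sqrtr; last by do 2 (apply: sumr_ge0 => ? _); exact: sqr_ge0.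
rewrite /vnorm sqr_sqrtr; last by apply: sumr_ge0 => ? _; exact: sqr_ge0.
rewrite /dot mulr_suml; apply: ler_sum => i _.
by rewrite mxE -expr2 cauchy_schwarz.
Qed.

Lemma specnorm_has_ubound M :
  has_ubound [set vnorm (M *m x) | x in [set x : 'cV[R]_q | vnorm x <= 1]].
Proof.
exists (Num.sqrt (\sum_i \sum_j M i j ^+ 2)) => _ [x x_le1 <-].
apply: le_trans (vnorm_mulmx_le_entries M x) _.
by rewrite -[leRHS]mulr1 ler_wpM2l ?sqrtr_ge0.
Qed.

Lemma specnorm_ge0 M : 0 <= specnorm M.
Proof.
apply: (ub_le_sup (specnorm_has_ubound M)).
by exists 0; rewrite /= ?mulmx0 vnorm0 // ler01.
Qed.

Lemma vnorm_mulmx_le M (v : 'cV[R]_q) : vnorm (M *m v) <= specnorm M * vnorm v.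
Proof.
have [v0|vn0] := eqVneq (vnorm v) 0.
  by apply: le_trans (vnorm_mulmx_le_entries M v) _; rewrite v0 !mulr0.
have vp : 0 < vnorm v by rewrite lt_def vn0 vnorm_ge0.
have : vnorm (M *m ((vnorm v)^-1 *: v)) <= specnorm M.
  apply: (ub_le_sup (specnorm_has_ubound M)); exists ((vnorm v)^-1 *: v) => //=.
  by rewrite vnormZ ger0_norm ?invr_ge0 ?vnorm_ge0 // mulVf.
rewrite -scalemxAr vnormZ ger0_norm ?invr_ge0 ?vnorm_ge0 //.
by rewrite -(ler_pM2l vp) mulrA mulfV // mul1r mulrC.
Qed.

End OperatorNorm.

Section Frobenius.
Variables m n : nat.
Implicit Types F G : 'I_n -> 'cV[R]_m.

Lemma frob_ge0 F : 0 <= frob F.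
Proof. exact: sqrtr_ge0. Qed.

Lemma frob_sq F : frob F ^+ 2 = \sum_i vnorm (F i) ^+ 2.
Proof. by rewrite sqr_sqrtr //; apply: sumr_ge0 => i _; exact: sqr_ge0. Qed.

Lemma sum_dot_le_frob F G : \sum_i dot (F i) (G i) <= frob F * frob G.
Proof. exact: le_trans (ler_sum _ (fun i _ => dot_le _ _)) (cauchy_schwarz_sqrt _ _). Qed.

Lemma frob_mulmx_le k (M : 'M[R]_(k, m)) F :
  frob (fun i => M *m F i) <= specnorm M * frob F.
Proof.
have M_ge0 := specnorm_ge0 M.
rewrite /frob -[specnorm M]ger0_norm // -sqrtr_sqr -sqrtrM ?sqr_ge0 //.
rewrite ler_sqrt ?mulr_ge0 ?sqr_ge0 ?sumr_ge0 // => [|i _]; last exact: sqr_ge0.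
rewrite mulr_sumr; apply: ler_sum => i _.
by rewrite -exprMn lerXn2r ?nnegrE ?vnorm_mulmx_le ?mulr_ge0 ?vnorm_ge0.
Qed.

End Frobenius.

End EuclideanNorm.

Section DerivativesAlongLines.
Variable R : realType.

Lemma is_derive_sumf n (h : 'I_n -> R -> R) (dh : 'I_n -> R) (x : R) :
  (forall i, is_derive x 1 (h i) (dh i)) ->
  is_derive x 1 (fun t => \sum_i h i t) (\sum_i dh i).
Proof. by move=> hd; rewrite -fct_sumE; exact: is_derive_sum. Qed.

Lemma is_derive_mulf (f g : R -> R) (df dg x : R) :
  is_derive x 1 f df -> is_derive x 1 g dg ->
  is_derive x 1 (fun t => f t * g t) (f x * dg + g x * df).
Proof. exact: is_deriveM. Qed.

Lemma is_derive_dot_line m (u v0 v1 : 'cV[R]_m) (x : R) :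
  is_derive x 1 (fun t => dot u (v0 + t *: v1)) (dot u v1).
Proof.
have -> : (fun t => dot u (v0 + t *: v1)) = (fun t => dot u v0 + t * dot u v1).
  by apply: funext => t; rewrite dotDr dotZr.
have h : is_derive x 1 (fun t => dot u v0 + t * dot u v1) (0 + (x * 0 + dot u v1 * 1)).
  exact: is_deriveD (is_derive_cst _ x 1)
           (is_deriveM (is_derive_id x 1) (is_derive_cst _ x 1)).
by apply: is_derive_eq h _; rewrite mulr0 mulr1 !add0r.
Qed.

Lemma is_derive_dot_affine m (u0 u1 v0 v1 : 'cV[R]_m) (x : R) :
  is_derive x 1 (fun t => dot (u0 + t *: u1) (v0 + t *: v1))
    (dot u1 (v0 + x *: v1) + dot (u0 + x *: u1) v1).
Proof.
have -> : (fun t => dot (u0 + t *: u1) (v0 + t *: v1)) =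
    (fun t => dot u0 (v0 + t *: v1) + t * dot u1 (v0 + t *: v1)).
  by apply: funext => t; rewrite dotDl dotZl.
have h := is_deriveD (is_derive_dot_line u0 v0 v1 x)
            (is_derive_mulf (is_derive_id x 1) (is_derive_dot_line u1 v0 v1 x)).
by apply: is_derive_eq h _; rewrite mulr1 dotDl dotZl; ring.
Qed.

End DerivativesAlongLines.

Section ProbabilityWeights.
Variables (R : realType) (n m : nat) (p : 'I_n -> R).

Definition wmean (Z : 'I_n -> 'cV[R]_m) : 'cV[R]_m := \sum_j p j *: Z j.

Hypotheses (p_ge0 : forall j, 0 <= p j) (p_sum1 : \sum_j p j = 1).
Variable Z : 'I_n -> 'cV[R]_m.

Lemma sum_centered : \sum_j p j *: (Z j - wmean Z) = 0.
Proof.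
under eq_bigr do rewrite scalerBr.
by rewrite sumrB -scaler_suml p_sum1 scale1r subrr.
Qed.

Lemma sum_centered_scale (s : 'I_n -> R) :
  \sum_j (p j * (s j - \sum_l p l * s l)) *: Z j
  = \sum_j (p j * s j) *: (Z j - wmean Z).
Proof.
transitivity (\sum_j (p j * s j) *: Z j - (\sum_l p l * s l) *: wmean Z).
  rewrite /wmean scaler_sumr -sumrB; apply: eq_bigr => j _.
  by rewrite scalerA -scalerBl; congr (_ *: _); ring.
by under [RHS]eq_bigr do rewrite scalerBr; rewrite sumrB -scaler_suml.
Qed.

Lemma wvariance : \sum_j p j * vnorm (Z j - wmean Z) ^+ 2
  = \sum_j p j * vnorm (Z j) ^+ 2 - vnorm (wmean Z) ^+ 2.
Proof.
have cross : \sum_j p j * dot (Z j) (wmean Z) = dot (wmean Z) (wmean Z).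
  by rewrite [in RHS]dot_suml; apply: eq_bigr => j _; rewrite dotZl.
transitivity (\sum_j (p j * vnorm (Z j) ^+ 2 - 2 * (p j * dot (Z j) (wmean Z))
                      + vnorm (wmean Z) ^+ 2 * p j)).
  by apply: eq_bigr => j _; rewrite !vnorm_sq dotBl !dotBr (dotC (wmean Z)); ring.
by rewrite big_split sumrB /= -!mulr_sumr cross p_sum1 vnorm_sq; ring.
Qed.

Variable r : R.
Hypothesis Z_le : forall j, vnorm (Z j) <= r.

Lemma vnorm_wmean_le : vnorm (wmean Z) <= r.
Proof.
apply: le_trans (vnorm_sum _) _.
rewrite -[leRHS]mul1r -p_sum1 mulr_suml; apply: ler_sum => j _.
by rewrite vnormZ ger0_norm // ler_wpM2l.
Qed.

Lemma vnorm_centered_le j : vnorm (Z j - wmean Z) <= 2 * r.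
Proof.
apply: le_trans (vnormD _ _) _; rewrite vnormN -[2]/(1 + 1) mulrDl mul1r.
exact: lerD (Z_le j) vnorm_wmean_le.
Qed.

Lemma wvariance_le : \sum_j p j * vnorm (Z j - wmean Z) ^+ 2 <= r ^+ 2.
Proof.
rewrite wvariance lerBlDr; apply: ler_wpDr; first exact: sqr_ge0.
rewrite -[leRHS]mul1r -p_sum1 mulr_suml; apply: ler_sum => j _.
by rewrite ler_wpM2l // lerXn2r ?nnegrE ?vnorm_ge0 ?(le_trans (vnorm_ge0 (Z j))).
Qed.

Lemma vnorm_sum_dot_centered_le (b : 'cV[R]_m) :
  vnorm (\sum_j (p j * dot b (Z j - wmean Z)) *: (Z j - wmean Z)) <= vnorm b * r ^+ 2.
Proof.
apply: le_trans (vnorm_sum _) _.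
apply: le_trans (_ : _ <= vnorm b * \sum_j p j * vnorm (Z j - wmean Z) ^+ 2) _.
  rewrite mulr_sumr; apply: ler_sum => j _.
  set W := Z j - wmean Z.
  rewrite [leRHS](_ : _ = p j * (vnorm b * vnorm W) * vnorm W); last by ring.
  rewrite vnormZ normrM ger0_norm // ler_wpM2r ?vnorm_ge0 //.
  by rewrite ler_wpM2l ?norm_dot_le.
by rewrite ler_wpM2l ?vnorm_ge0 ?wvariance_le.
Qed.

Lemma vnorm_sum_scale_centered_le (c : 'I_n -> R) :
  vnorm (\sum_j (p j * c j) *: (Z j - wmean Z)) <= 2 * r * \sum_j p j * `|c j|.
Proof.
apply: le_trans (vnorm_sum _) _; rewrite mulr_sumr; apply: ler_sum => j _.
rewrite vnormZ normrM ger0_norm // [leRHS]mulrC.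
by rewrite ler_wpM2l ?mulr_ge0 ?vnorm_centered_le.
Qed.

End ProbabilityWeights.

Section Attention.
Variables (R : realType) (d n : nat) (A : 'M[R]_d).
Implicit Types Z H : 'I_n -> 'cV[R]_d.

Definition attn_avg Z i : 'cV[R]_d := wmean (attnP A Z i) Z.

Lemma attnP_ge0 Z i j : 0 <= attnP A Z i j.
Proof. by rewrite divr_ge0 ?expR_ge0 ?sumr_ge0 // => l _; rewrite expR_ge0. Qed.

Lemma attnP_sum1 Z i : \sum_j attnP A Z i j = 1.
Proof.
rewrite -mulr_suml mulfV // lt0r_neq0 // (bigD1 i) //=.
by rewrite ltr_pwDl ?expR_gt0 ?sumr_ge0 // => l _; rewrite expR_ge0.
Qed.

(* [dscore Z H i l] and [dattn_avg Z H i] are the derivatives of the score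
   x_i^T A^T x_l and of [attn_avg _ i] at Z in the direction H. *)
Definition dscore Z H i l : R := dot (A *m H i) (Z l) + dot (A *m Z i) (H l).

Definition dattn_avg Z H i : 'cV[R]_d :=
  \sum_j attnP A Z i j *: H j
  + \sum_j (attnP A Z i j * (dscore Z H i j - \sum_l attnP A Z i l * dscore Z H i l))
           *: Z j.

Section RowBound.
Variables (Z H : 'I_n -> 'cV[R]_d) (r : R).
Hypothesis Z_le : forall j, vnorm (Z j) <= r.

Lemma vnorm_dattn_avg_le i :
  vnorm (dattn_avg Z H i) <= (1 + 2 * specnorm A * r ^+ 2) *
      (\sum_j attnP A Z i j * vnorm (H j)) + specnorm A * r ^+ 2 * vnorm (H i).
Proof.
rewrite /dattn_avg; set p := attnP A Z i; set a := specnorm A.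
set W := fun j => Z j - wmean p Z.
have r_ge0 : 0 <= r := le_trans (vnorm_ge0 _) (Z_le i).
have [p_ge0 p_sum1] := (attnP_ge0 Z i, attnP_sum1 Z i).
(* the constant part dot (A *m H i) (wmean p Z) of the centred scores drops out *)
have -> : \sum_j (p j * (dscore Z H i j - \sum_l p l * dscore Z H i l)) *: Z j
    = \sum_j (p j * dot (A *m H i) (W j)) *: W j
      + \sum_j (p j * dot (A *m Z i) (H j)) *: W j.
  rewrite sum_centered_scale //.
  transitivity (\sum_j ((p j * dot (A *m H i) (W j)) *: W j
                        + (p j * dot (A *m Z i) (H j)) *: W j)
                + dot (A *m H i) (wmean p Z) *: \sum_j p j *: W j).
    rewrite scaler_sumr -big_split; apply: eq_bigr => j _ /=.
    rewrite -/(W j) /dscore -[Z j](subrK (wmean p Z)) dotDr -/(W j) scalerA -!scalerDl.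
    by congr (_ *: _); ring.
  by rewrite sum_centered // scaler0 addr0 big_split.
have avg_le : vnorm (\sum_j p j *: H j) <= \sum_j p j * vnorm (H j).
  apply: le_trans (vnorm_sum _) _; apply: ler_sum => j _.
  by rewrite vnormZ ger0_norm.
have cov1_le : vnorm (\sum_j (p j * dot (A *m H i) (W j)) *: W j)
    <= a * vnorm (H i) * r ^+ 2.
  apply: le_trans (vnorm_sum_dot_centered_le p_ge0 p_sum1 Z_le _) _.
  by rewrite ler_wpM2r ?sqr_ge0 ?vnorm_mulmx_le.
have cov2_le : vnorm (\sum_j (p j * dot (A *m Z i) (H j)) *: W j)
    <= 2 * r * (a * r * \sum_j p j * vnorm (H j)).
  apply: le_trans (vnorm_sum_scale_centered_le p_ge0 p_sum1 Z_le _) _.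
  rewrite ler_wpM2l ?mulr_ge0 // mulr_sumr ler_sum // => j _.
  rewrite mulrCA ler_wpM2l //; apply: le_trans (norm_dot_le _ _) _.
  rewrite ler_wpM2r ?vnorm_ge0 //; apply: le_trans (vnorm_mulmx_le _ _) _.
  by rewrite ler_wpM2l ?specnorm_ge0.
apply: le_trans (vnormD _ _) _.
apply: le_trans (lerD avg_le (le_trans (vnormD _ _) (lerD cov1_le cov2_le))) _.
lra.
Qed.

Lemma frob_dattn_avg_le :
  frob (dattn_avg Z H) <= Num.sqrt 3 *
    Num.sqrt (specnorm A ^+ 2 * r ^+ 4 * (4 * n%:R + 1) + n%:R) * frob H.
Proof.
set a := specnorm A; set b := a * r ^+ 2.
have b2 : a ^+ 2 * r ^+ 4 = b ^+ 2 by rewrite /b exprMn -exprM.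
have row_le i : vnorm (dattn_avg Z H i) ^+ 2
    <= 3 * ((1 + 4 * b ^+ 2) * frob H ^+ 2 + b ^+ 2 * vnorm (H i) ^+ 2).
  have b_ge0 : 0 <= b.
    by rewrite mulr_ge0 ?specnorm_ge0 ?exprn_ge0 ?(le_trans (vnorm_ge0 _) (Z_le i)).
  set x := \sum_j attnP A Z i j * vnorm (H j); set h := vnorm (H i).
  have x_ge0 : 0 <= x by rewrite sumr_ge0 // => j _; rewrite mulr_ge0 ?attnP_ge0 ?vnorm_ge0.
  have x2_le : x ^+ 2 <= frob H ^+ 2.
    by rewrite frob_sq; exact: sqr_wsum_le (attnP_ge0 Z i) (attnP_sum1 Z i) _.
  have one2b_ge0 : 0 <= 1 + 2 * b by apply: addr_ge0 => //; apply: mulr_ge0.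
  have T_ge0 : 0 <= (1 + 2 * b) * x + b * h.
    by apply: addr_ge0; apply: mulr_ge0; rewrite ?vnorm_ge0.
  apply: le_trans (_ : ((1 + 2 * b) * x + b * h) ^+ 2 <= _).
    rewrite lerXn2r ?nnegrE ?vnorm_ge0 //.
    by apply: le_trans (vnorm_dattn_avg_le i) _; rewrite -mulrA.
  (* (u + v + w)^2 <= 3 (u^2 + v^2 + w^2) with u = x, v = 2 b x, w = b h *)
  rewrite -subr_ge0.
  have -> : 3 * ((1 + 4 * b ^+ 2) * frob H ^+ 2 + b ^+ 2 * h ^+ 2)
            - ((1 + 2 * b) * x + b * h) ^+ 2
      = (x - 2 * b * x) ^+ 2 + (2 * b * x - b * h) ^+ 2 + (x - b * h) ^+ 2
        + 3 * (1 + 4 * b ^+ 2) * (frob H ^+ 2 - x ^+ 2) by ring.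
  have c_ge0 : 0 <= 3 * (1 + 4 * b ^+ 2) :> R.
    by apply: mulr_ge0 => //; apply: addr_ge0 => //; apply: mulr_ge0; rewrite ?sqr_ge0.
  by rewrite !addr_ge0 ?sqr_ge0 // mulr_ge0 // subr_ge0.
rewrite b2.
have sum_le : frob (dattn_avg Z H) ^+ 2
    <= 3 * (b ^+ 2 * (4 * n%:R + 1) + n%:R) * frob H ^+ 2.
  rewrite frob_sq; apply: le_trans (ler_sum _ (fun i _ => row_le i)) _.
  rewrite -mulr_sumr big_split /= sumr_const card_ord -mulr_sumr -frob_sq.
  rewrite -mulr_natr; lra.
have C_ge0 : 0 <= b ^+ 2 * (4 * n%:R + 1) + n%:R :> R.
  by rewrite addr_ge0 // mulr_ge0 ?sqr_ge0 // addr_ge0 // mulr_ge0.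
have bound_ge0 : 0 <= 3 * (b ^+ 2 * (4 * n%:R + 1) + n%:R) * frob H ^+ 2.
  by rewrite mulr_ge0 ?sqr_ge0 // mulr_ge0.
rewrite -[leLHS]ger0_norm ?frob_ge0 // -sqrtr_sqr.
apply: le_trans (_ : _ <= Num.sqrt (3 * (b ^+ 2 * (4 * n%:R + 1) + n%:R)
                                     * frob H ^+ 2)) _; first by rewrite ler_sqrt.
by rewrite sqrtrM ?mulr_ge0 // sqrtr_sqr ger0_norm ?frob_ge0 // sqrtrM.
Qed.

End RowBound.

Section AlongSegment.
Variables Y H : 'I_n -> 'cV[R]_d.

Definition segment (t : R) j : 'cV[R]_d := Y j + t *: H j.

Lemma is_derive_attnP i j (x : R) :
  is_derive x 1 (fun t => attnP A (segment t) i j)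
    (attnP A (segment x) i j * (dscore (segment x) H i j
       - \sum_l attnP A (segment x) i l * dscore (segment x) H i l)).
Proof.
set q := fun t l => dot (A *m Y i + t *: (A *m H i)) (Y l + t *: H l).
have qE t l : ((segment t i)^T *m A^T *m segment t l) 0 0 = q t l.
  by rewrite mulmx_trmx_dot mulmxDr -scalemxAr.
have dq l : is_derive x 1 (q^~ l) (dscore (segment x) H i l).
  apply: is_derive_eq (is_derive_dot_affine _ _ _ _ x) _.
  by rewrite /dscore /segment mulmxDr -scalemxAr.
set S := fun t => \sum_l expR (q t l).
have S_gt0 : 0 < S x.
  by rewrite /S (bigD1 i) //= ltr_pwDl ?expR_gt0 ?sumr_ge0 // => l _; rewrite expR_ge0.
have attnPE t l : attnP A (segment t) i l = expR (q t l) / S t.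
  by rewrite /attnP qE; congr (_ / _); apply: eq_bigr => l' _; rewrite qE.
have dS : is_derive x 1 S (\sum_l expR (q x l) * dscore (segment x) H i l).
  by apply: is_derive_sumf => l; exact: is_derive1_comp (is_derive_expR _) (dq l).
have dSV : is_derive x 1 (fun t => (S t)^-1)
    (- (S x) ^- 2 * \sum_l expR (q x l) * dscore (segment x) H i l).
  exact: is_deriveV (lt0r_neq0 S_gt0) dS.
rewrite (funext (attnPE^~ j)).
apply: is_derive_eq (is_derive_mulf (is_derive1_comp (is_derive_expR _) (dq j)) dSV) _.
under [in RHS]eq_bigr do rewrite attnPE.
rewrite -/(S x) attnPE.
under [in RHS]eq_bigr do rewrite mulrAC.
by rewrite -mulr_suml /=; field; exact: lt0r_neq0.
Qed.

Lemma is_derive_dot_attn_avg (g : 'cV[R]_d) i (x : R) :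
  is_derive x 1 (fun t => dot g (attn_avg (segment t) i))
    (dot g (dattn_avg (segment x) H i)).
Proof.
have -> : (fun t => dot g (attn_avg (segment t) i)) =
    (fun t => \sum_j attnP A (segment t) i j * dot g (segment t j)).
  by apply: funext => t; rewrite dot_sumr; apply: eq_bigr => j _; rewrite dotZr.
apply: is_derive_eq (is_derive_sumf (fun j =>
  is_derive_mulf (is_derive_attnP i j x) (is_derive_dot_line g (Y j) (H j) x))) _.
rewrite dotDr !dot_sumr -big_split; apply: eq_bigr => j _ /=.
by rewrite !dotZr /segment; ring.
Qed.

End AlongSegment.

Lemma attn_avg_lipschitz (X Y : 'I_n -> 'cV[R]_d) r :
  (forall i, vnorm (X i) <= r) -> (forall i, vnorm (Y i) <= r) ->
  frob (fun i => attn_avg X i - attn_avg Y i) <=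
    Num.sqrt 3 * Num.sqrt (specnorm A ^+ 2 * r ^+ 4 * (4 * n%:R + 1) + n%:R) *
    frob (fun i => X i - Y i).
Proof.
move=> X_le Y_le.
set H := fun i => X i - Y i; set G := fun i => attn_avg X i - attn_avg Y i.
set phi := fun t => \sum_i dot (G i) (attn_avg (segment Y H t) i).
have phi_diff : phi 1 - phi 0 = frob G ^+ 2.
  rewrite /phi.
  have -> : segment Y H 0 = Y by apply: funext => j; rewrite /segment scale0r addr0.
  have -> : segment Y H 1 = X by apply: funext => j; rewrite /segment scale1r addrC subrK.
  by rewrite -sumrB frob_sq; apply: eq_bigr => i _; rewrite -dotBr vnorm_sq.
have dphi (t : R) : is_derive t 1 phi (\sum_i dot (G i) (dattn_avg (segment Y H t) H i)).
  exact: is_derive_sumf (fun i => is_derive_dot_attn_avg _ _ _ _ _).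
have [c c01 mvt] := MVT ltr01 (fun t _ => dphi t)
  (derivable_within_continuous (fun t _ => @ex_derive _ _ _ _ _ _ _ (dphi t))).
have seg_le j : vnorm (segment Y H c j) <= r.
  move: c01; rewrite in_itv /= => /andP[c_gt0 c_lt1].
  by apply: vnorm_segment_le => //; rewrite !ltW.
set B := Num.sqrt 3 * _ * frob H.
have : frob G ^+ 2 <= frob G * B.
  rewrite -phi_diff mvt subr0 mulr1; apply: le_trans (sum_dot_le_frob _ _) _.
  by apply: ler_wpM2l; [exact: frob_ge0 | exact: frob_dattn_avg_le].
have := frob_ge0 G; have : 0 <= B by rewrite !mulr_ge0 ?sqrtr_ge0 ?frob_ge0.
nra.
Qed.

End Attention.

Theorem mainTheorem1 (R : realType) (k d n : nat) (Q K V : 'M[R]_(k, d)) (r : R)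
  (hr : 0 < r) :
  let A : 'M[R]_d := (Num.sqrt (k%:R))^-1 *: (K^T *m Q) in
  forall X Y : 'I_n -> 'cV[R]_d,
    (forall i, vnorm (X i) <= r) -> (forall i, vnorm (Y i) <= r) ->
    frob (fun i => selfattn A V X i - selfattn A V Y i) <=
      Num.sqrt 3 * specnorm V *
      Num.sqrt (specnorm A ^+ 2 * r ^+ 4 * (4 * n%:R + 1) + n%:R) *
      frob (fun i => X i - Y i).
Proof.
move=> A X Y X_le Y_le.
have -> : (fun i => selfattn A V X i - selfattn A V Y i) =
          (fun i => V *m (attn_avg A X i - attn_avg A Y i)).
  by apply: funext => i; rewrite mulmxBr.
apply: le_trans (frob_mulmx_le _ _) _.
set C := Num.sqrt (specnorm A ^+ 2 * r ^+ 4 * (4 * n%:R + 1) + n%:R).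
set H := frob (fun i => X i - Y i).
rewrite (_ : _ * C * _ = specnorm V * (Num.sqrt 3 * C * H)); last by ring.
by apply: ler_wpM2l; [exact: specnorm_ge0 | exact: attn_avg_lipschitz].
Qed.
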